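(* Let $S=s_1,\ldots,s_n$ be a sequence of positive real numbers, $\gamma>0$, $k$ a positive integer. Let $(L,\alpha,\beta)$ be an optimal solution of $\textsc{Exp}$ for $S,\gamma,k$, with $L=\ell_1,\ldots,\ell_n$, and let $g=(\prod_{i=1}^ns_i)^{1/n}$. Then \[ \sum_{i=1}^n\big(-\log\beta-\ell_i\log\alpha\big)\ge n\log g. \]
   Context: A level sequence is $L=\ell_1,\ldots,\ell_n$ of integers with $0\le\ell_i\le k$; set $\ell_0=0$. The penalty is $\mathrm{pen}(x,y)=\max(y-x,0)\,\gamma\log n$; $p_{\exp}(s;\lambda)=\lambda e^{-\lambda s}$; $\mathrm{score}_{\exp}(L,S;\alpha,\beta,\gamma)=\sum_{i=1}^n\big[-\log p_{\exp}(s_i;\beta\alpha^{\ell_i})+\mathrm{pen}(\ell_{i-1},\ell_i)\big]$. Problem $\textsc{Exp}$: given $S,\gamma,k$, find $L$ and parameters $\alpha>1$, $\beta>0$ minimizing this score. The paper assumes $s_i>0$ for this problem. *)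

From Stdlib Require Import Reals List.
Import ListNotations.
Open Scope R_scope.

Definition p_exp (s lam : R) : R := lam * exp (- lam * s).

(* pen(x,y) = max(y - x, 0) * gamma * log n ; levels are naturals, so the
   truncated subtraction (y - x)%nat is exactly max(y - x, 0). *)
Definition pen (gamma : R) (n : nat) (x y : nat) : R :=
  INR (y - x)%nat * gamma * ln (INR n).

Fixpoint score_aux (gamma : R) (n : nat) (alpha beta : R)
    (prev : nat) (L : list nat) (S : list R) : R :=
  match L, S with
  | l :: L', s :: S' =>
      - ln (p_exp s (beta * alpha ^ l)) + pen gamma n prev l
      + score_aux gamma n alpha beta l L' S'
  | _, _ => 0
  end.

Definition score_exp (L : list nat) (S : list R) (alpha beta gamma : R) : R :=
  score_aux gamma (length S) alpha beta 0%nat L S.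

Definition feasible_exp (S : list R) (k : nat) (L : list nat) (alpha beta : R) : Prop :=
  length L = length S /\ Forall (fun l => (l <= k)%nat) L /\ 1 < alpha /\ 0 < beta.

Definition optimal_exp (S : list R) (gamma : R) (k : nat)
    (L : list nat) (alpha beta : R) : Prop :=
  feasible_exp S k L alpha beta /\
  forall (L' : list nat) (alpha' beta' : R),
    feasible_exp S k L' alpha' beta' ->
    score_exp L S alpha beta gamma <= score_exp L' S alpha' beta' gamma.

Definition sumR (l : list R) : R := fold_right Rplus 0 l.
Definition prodR (l : list R) : R := fold_right Rmult 1 l.

Definition geo_mean (S : list R) : R :=
  Rpower (prodR S) (/ INR (length S)).

(* Rescaling β by c > 0 changes the score by (c - 1) X - n ln c, where
   X = Σ β α^ℓᵢ sᵢ; this is minimised exactly at c = n / X, so optimality of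
   β forces X = n.  The claimed sum equals Σ ln sᵢ - Σ ln(β α^ℓᵢ sᵢ), and
   ln x ≤ x - 1 bounds the subtracted term by X - n = 0. *)
From Stdlib Require Import Reals List Lra Lia.
Import ListNotations.
Open Scope R_scope.

Lemma ln_le_sub1 (x : R) : 0 < x -> ln x <= x - 1.
Proof.
  intros Hx. pose proof (exp_ineq1_le (ln x)) as H. rewrite exp_ln in H; lra.
Qed.

Lemma ln_lt_sub1 (x : R) : 0 < x -> x <> 1 -> ln x < x - 1.
Proof.
  intros Hx Hx1. pose proof (exp_ineq1 (ln x) (ln_neq_0 x Hx1 Hx)) as H.
  rewrite exp_ln in H; lra.
Qed.

Lemma sumR_ln_le (xs : list R) :
  Forall (fun x => 0 < x) xs -> sumR (map ln xs) <= sumR xs - INR (length xs).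
Proof.
  unfold sumR; induction 1 as [|x xs Hx _ IH]; cbn [map fold_right length]; [simpl; lra|].
  rewrite S_INR. pose proof (ln_le_sub1 x Hx). lra.
Qed.

Lemma sumR_pos (xs : list R) :
  Forall (fun x => 0 < x) xs -> xs <> [] -> 0 < sumR xs.
Proof.
  intros Hxs Hne; destruct Hxs as [|x xs Hx Hxs]; [now destruct Hne|].
  cbn. enough (0 <= fold_right Rplus 0 xs) by lra.
  clear Hne; induction Hxs; cbn; lra.
Qed.

Lemma prodR_pos (xs : list R) : Forall (fun x => 0 < x) xs -> 0 < prodR xs.
Proof. induction 1; cbn; [lra | now apply Rmult_lt_0_compat]. Qed.

Lemma ln_prodR (xs : list R) :
  Forall (fun x => 0 < x) xs -> ln (prodR xs) = sumR (map ln xs).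
Proof.
  induction 1 as [|x xs Hx Hxs IH]; [exact ln_1|].
  change (ln (x * prodR xs) = ln x + sumR (map ln xs)).
  rewrite ln_mult, IH; [reflexivity | exact Hx | now apply prodR_pos].
Qed.

(* For empty [S] both sides vanish: [geo_mean [] = Rpower 1 (/ 0) = 1]. *)
Lemma length_mul_ln_geo_mean (S : list R) :
  Forall (fun s => 0 < s) S -> INR (length S) * ln (geo_mean S) = sumR (map ln S).
Proof.
  intros HS. unfold geo_mean. rewrite ln_Rpower, ln_prodR by exact HS.
  destruct S as [|s S]; cbn [length map sumR fold_right]; [lra|].
  field. apply not_0_INR. discriminate.
Qed.

Lemma ln_rate (alpha beta : R) (l : nat) : 0 < alpha -> 0 < beta ->
  ln (beta * alpha ^ l) = ln beta + INR l * ln alpha.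
Proof. intros Ha Hb. rewrite ln_mult, ln_pow by (try apply pow_lt; lra). reflexivity. Qed.

Lemma neg_ln_p_exp (s lam : R) : 0 < lam -> - ln (p_exp s lam) = lam * s - ln lam.
Proof.
  intros Hlam. unfold p_exp. rewrite ln_mult, ln_exp by (try apply exp_pos; lra). ring.
Qed.

Fixpoint standardized (alpha beta : R) (L : list nat) (S : list R) : list R :=
  match L, S with
  | l :: L', s :: S' => beta * alpha ^ l * s :: standardized alpha beta L' S'
  | _, _ => []
  end.

Section Standardized.

Variables (alpha beta : R).
Hypotheses (Halpha : 0 < alpha) (Hbeta : 0 < beta).

Lemma rate_pos (l : nat) : 0 < beta * alpha ^ l.
Proof. apply Rmult_lt_0_compat; [exact Hbeta | apply pow_lt; exact Halpha]. Qed.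

Lemma length_standardized (L : list nat) (S : list R) :
  length L = length S -> length (standardized alpha beta L S) = length S.
Proof.
  revert S; induction L as [|l L IH]; intros [|s S] HL; cbn in *; try discriminate;
    [reflexivity | now rewrite IH by congruence].
Qed.

Lemma standardized_pos (L : list nat) (S : list R) :
  Forall (fun s => 0 < s) S -> Forall (fun x => 0 < x) (standardized alpha beta L S).
Proof.
  intros HS; revert L; induction HS as [|s S Hs _ IH]; intros [|l L]; cbn; constructor.
  - apply Rmult_lt_0_compat; [apply rate_pos | exact Hs].
  - apply IH.
Qed.

Lemma sum_neg_ln_rate (L : list nat) (S : list R) :
  Forall (fun s => 0 < s) S -> length L = length S ->
  sumR (map (fun l => - ln beta - INR l * ln alpha) L)
  = sumR (map ln S) - sumR (map ln (standardized alpha beta L S)).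
Proof.
  intros HS; revert L; induction HS as [|s S Hs _ IH]; intros [|l L] HL;
    cbn in *; try discriminate; [lra|].
  unfold sumR in IH. rewrite IH by congruence.
  rewrite ln_mult, ln_rate by (try apply rate_pos; assumption). ring.
Qed.

Lemma score_aux_scale_beta (gamma : R) (n : nat) (c : R) (prev : nat)
    (L : list nat) (S : list R) : 0 < c ->
  score_aux gamma n alpha (c * beta) prev L S
  = score_aux gamma n alpha beta prev L S
    + (c - 1) * sumR (standardized alpha beta L S)
    - INR (length (standardized alpha beta L S)) * ln c.
Proof.
  intros Hc; revert prev S; induction L as [|l L IH]; intros prev [|s S];
    try (simpl; ring).
  cbn [score_aux standardized sumR fold_right length].
  replace (c * beta * alpha ^ l) with (c * (beta * alpha ^ l)) by ring.
  pose proof (rate_pos l) as Hrate.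
  rewrite IH, S_INR, !neg_ln_p_exp, (ln_mult c) by first [lra | apply Rmult_lt_0_compat; lra].
  unfold sumR. ring.
Qed.

End Standardized.

Lemma mass_eq_of_scale_optimal (n X : R) : 0 < n -> 0 < X ->
  (forall c, 0 < c -> 0 <= (c - 1) * X - n * ln c) -> X = n.
Proof.
  intros Hn HX Hopt.
  destruct (Req_dec (X / n) 1) as [E|Hm]; [| exfalso].
  { replace X with (X / n * n) by (field; lra). rewrite E; ring. }
  assert (Hm0 : 0 < X / n) by (apply Rdiv_lt_0_compat; assumption).
  pose proof (Hopt (/ (X / n)) (Rinv_0_lt_compat _ Hm0)) as H.
  rewrite ln_Rinv in H by exact Hm0.
  replace ((/ (X / n) - 1) * X) with (n * (1 - X / n)) in H by (field; lra).
  pose proof (ln_lt_sub1 _ Hm0 Hm). nra.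
Qed.

Theorem lemma9 (S : list R) (gamma : R) (k : nat) (L : list nat) (alpha beta : R) :
  Forall (fun s => 0 < s) S ->
  0 < gamma ->
  (0 < k)%nat ->
  optimal_exp S gamma k L alpha beta ->
  sumR (map (fun l => - ln beta - INR l * ln alpha) L)
    >= INR (length S) * ln (geo_mean S).
Proof.
  intros HS _ _ [[HL [Hk [Ha Hb]]] Hopt].
  assert (Ha0 : 0 < alpha) by lra.
  rewrite length_mul_ln_geo_mean, (sum_neg_ln_rate alpha beta Ha0 Hb L S) by assumption.
  destruct (Nat.eq_0_gt_0_cases (length S)) as [Hnil | Hn].
  { apply length_zero_iff_nil in Hnil; subst S. destruct L; [cbn; lra | discriminate]. }
  set (xs := standardized alpha beta L S).
  assert (Hxs : Forall (fun x => 0 < x) xs) by now apply standardized_pos.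
  assert (Hlen : length xs = length S) by now apply length_standardized.
  assert (Hmass : sumR xs = INR (length S)).
  { apply mass_eq_of_scale_optimal; [now apply lt_0_INR | |].
    - apply sumR_pos; [exact Hxs|]. intros E. rewrite E in Hlen. cbn in Hlen. lia.
    - intros c Hc.
      assert (Hfeas : feasible_exp S k L alpha (c * beta))
        by (repeat split; try assumption; now apply Rmult_lt_0_compat).
      pose proof (Hopt L alpha (c * beta) Hfeas) as Hle.
      unfold score_exp in Hle. rewrite score_aux_scale_beta in Hle by assumption.
      fold xs in Hle. rewrite Hlen in Hle. lra. }
  pose proof (sumR_ln_le xs Hxs) as Hln. rewrite Hlen in Hln. lra.
Qed.
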